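(* Let $\alpha,\beta,\gamma_1,\gamma_2\in\widehat{\mathbb{F}_q^\times}$ with $\varepsilon\notin\{\alpha,\overline{\beta}\gamma_1\gamma_2\}$. Then for every $x\in\mathbb{F}_q$ and $y\in\mathbb{F}_q^\times$, $$F_4\!\left({\alpha;\beta\atop\gamma_1,\gamma_2};x,y\right)=\frac{g(\overline{\alpha}\beta)g(\alpha\overline{\gamma_2})}{g(\beta)g(\overline{\gamma_2})}\,\overline{\alpha}(y)\,F_4\!\left({\alpha;\alpha\overline{\gamma_2}\atop\gamma_1,\alpha\overline{\beta}};\frac{x}{y},\frac{1}{y}\right).$$
   Context: $\mathbb{F}_q$ is a finite field with $q$ elements. $\widehat{\mathbb{F}_q^\times}$ is the group of multiplicative characters $\mathbb{F}_q^\times\to\overline{\mathbb{Q}}^\times$, $\varepsilon$ the trivial character; every character (including $\varepsilon$) is extended by $0$ at $0$; $\overline{\eta}=\eta^{-1}$; $\delta(\eta)=1$ if $\eta=\varepsilon$, else $0$. $\psi$ is a fixed non-trivial additive character. $g(\eta)=-\sum_{x\in\mathbb{F}_q^\times}\psi(x)\eta(x)$, $g^\circ(\eta)=q^{\delta(\eta)}g(\eta)$, $(\alpha)_\nu=g(\alpha\nu)/g(\alpha)$, $(\alpha)^\circ_\nu=g^\circ(\alpha\nu)/g^\circ(\alpha)$. For $x,y\in\mathbb{F}_q$, $F_4\!\left({\alpha;\beta\atop\gamma_1,\gamma_2};x,y\right)=\frac{1}{(1-q)^2}\sum_{\nu_1,\nu_2\in\widehat{\mathbb{F}_q^\times}}\frac{(\alpha)_{\nu_1\nu_2}(\beta)_{\nu_1\nu_2}}{(\gamma_1)^\circ_{\nu_1}(\gamma_2)^\circ_{\nu_2}(\varepsilon)^\circ_{\nu_1}(\varepsilon)^\circ_{\nu_2}}\nu_1(x)\nu_2(y)$.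 *)

From HB Require Import structures.
From mathcomp Require Import all_boot all_order all_algebra all_field.
From mathcomp Require Import boolp classical_sets fsbigop.
Set Implicit Arguments. Unset Strict Implicit. Unset Printing Implicit Defensive.
Import Order.TTheory GRing.Theory Num.Theory.
Local Open Scope ring_scope.
Local Open Scope classical_set_scope.

Section FiniteFieldHypergeometric.
Variable F : finFieldType.

Definition chr := {ffun F -> algC}.

(* A multiplicative character F_q^x -> Qbar^x, extended by 0 at 0. *)
Definition is_mchar (eta : chr) : Prop :=
  eta 0 = 0 /\ eta 1 = 1 /\ forall x y : F, eta (x * y) = eta x * eta y.

Definition mchars : set chr := [set eta | is_mchar eta].

Definition is_nontriv_addchar (psi : F -> algC) : Prop :=
  (forall x y : F, psi (x + y) = psi x * psi y) /\
  (forall x : F, psi x != 0) /\ (exists x : F, psi x != 1).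

(* trivial character, extended by 0 at 0 *)
Definition ch_eps : chr := [ffun x : F => (x != 0)%:R].
Definition ch_mul (a b : chr) : chr := [ffun x => a x * b x].
(* conjugate (= inverse) character; 0^-1 = 0 in MathComp *)
Definition ch_inv (a : chr) : chr := [ffun x => (a x)^-1].

Definition q : algC := (#|F|)%:R.

Definition ch_delta (eta : chr) : nat := (eta == ch_eps).

Variable psi : F -> algC.

Definition gauss (eta : chr) : algC := - \sum_(x : F | x != 0) psi x * eta x.
Definition gauss0 (eta : chr) : algC := q ^+ ch_delta eta * gauss eta.
Definition poch (a nu : chr) : algC := gauss (ch_mul a nu) / gauss a.
Definition poch0 (a nu : chr) : algC := gauss0 (ch_mul a nu) / gauss0 a.

Definition F4 (a b c1 c2 : chr) (x y : F) : algC :=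
  (1 - q) ^- 2 *
  \sum_(n1 \in mchars) \sum_(n2 \in mchars)
     (poch a (ch_mul n1 n2) * poch b (ch_mul n1 n2)
      / (poch0 c1 n1 * poch0 c2 n2 * poch0 ch_eps n1 * poch0 ch_eps n2)
      * n1 x * n2 y).

End FiniteFieldHypergeometric.

From HB Require Import structures.
From mathcomp Require Import all_boot all_order all_algebra all_field.
From mathcomp Require Import boolp classical_sets fsbigop.
From mathcomp Require Import ring.
Import GRing.Theory Num.Theory.

(* The index nu2 is replaced by conj(alpha nu1 nu2), an involution of the
   character group.  Every g°(eta) is then rewritten through the reflection
   formula g°(eta) g(conj eta) = eta(-1) q, after which the Pochhammer symbols
   of both sides agree up to the stated Gauss-sum prefactor: the signs
   eta(-1) = +-1 cancel in pairs, and
   nu1(x/y) conj(alpha nu1 nu2)(1/y) conj(alpha)(y) = nu1(x) nu2(y). *)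

Set Implicit Arguments. Unset Strict Implicit. Unset Printing Implicit Defensive.
Local Open Scope ring_scope.

Lemma mull_fixed_eq0 (R : idomainType) (c s : R) : c != 1 -> c * s = s -> s = 0.
Proof.
move=> c_neq1 /eqP; rewrite -subr_eq0 -{2}[s]mul1r -mulrBl mulf_eq0 subr_eq0.
by rewrite (negbTE c_neq1) => /eqP.
Qed.

Lemma fsbig_involution (R : Type) (idx : R) (op : Monoid.com_law idx)
    (T : choiceType) (A : set T) (h : T -> T) (f : T -> R) :
  (forall t, A t -> A (h t)) -> (forall t, A t -> h (h t) = t) ->
  \big[op/idx]_(t \in A) f t = \big[op/idx]_(t \in A) f (h t).
Proof.
move=> hA hK; apply: reindex_fsbig; split=> [t /hA //|t u|t At].
- by rewrite !in_setE => At Au htu; rewrite -[t]hK // htu hK.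
- by exists (h t); [exact: hA | exact: hK].
Qed.

Section MultiplicativeCharacters.
Variable F : finFieldType.
Implicit Types (a b l : chr F) (x y : F).

Lemma mchar0 l : is_mchar l -> l 0 = 0.
Proof. by case=> ->. Qed.

Lemma mchar1 l : is_mchar l -> l 1 = 1.
Proof. by case=> _ []. Qed.

Lemma mcharM l x y : is_mchar l -> l (x * y) = l x * l y.
Proof. by case=> _ []. Qed.

Lemma mchar_neq0 l x : is_mchar l -> x != 0 -> l x != 0.
Proof.
move=> [_ [l1 lM]] x_neq0; apply/eqP => lx0.
by move: l1; rewrite -(mulfV x_neq0) lM lx0 mul0r => /eqP; rewrite eq_sym oner_eq0.
Qed.

Lemma mcharN1_neq0 l : is_mchar l -> l (-1) != 0.
Proof. by move/mchar_neq0; apply; rewrite oppr_eq0 oner_eq0. Qed.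

Lemma mcharV l x : is_mchar l -> l x^-1 = (l x)^-1.
Proof.
move=> Hl; have [->|x_neq0] := eqVneq x 0; first by rewrite invr0 mchar0 ?invr0.
apply: (mulfI (mchar_neq0 Hl x_neq0)).
by rewrite -mcharM // !mulfV ?mchar_neq0 ?mchar1.
Qed.

Lemma mchar_sign l : is_mchar l -> l (-1) = 1 \/ l (-1) = -1.
Proof.
move=> Hl; have : l (-1) ^+ 2 = 1 by rewrite expr2 -mcharM // mulrNN mulr1 mchar1.
by move/eqP; rewrite sqrf_eq1 => /orP[] /eqP; [left | right].
Qed.

Lemma is_mchar_mul a b : is_mchar a -> is_mchar b -> is_mchar (ch_mul a b).
Proof.
move=> [a0 [a1 aM]] [b0 [b1 bM]]; split; first by rewrite ffunE a0 mul0r.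
by split=> [|x y]; rewrite !ffunE ?a1 ?b1 ?mulr1 // aM bM mulrACA.
Qed.

Lemma is_mchar_inv a : is_mchar a -> is_mchar (ch_inv a).
Proof.
move=> [a0 [a1 aM]]; split; first by rewrite ffunE a0 invr0.
by split=> [|x y]; rewrite !ffunE ?a1 ?invr1 // aM invfM.
Qed.

Lemma is_mchar_eps : is_mchar (ch_eps F).
Proof.
split; first by rewrite ffunE eqxx.
split=> [|x y]; rewrite !ffunE ?oner_eq0 // mulf_eq0 negb_or.
by case: (x != 0); case: (y != 0); rewrite ?mulr0 ?mulr1.
Qed.

Lemma mchar_eq a b : is_mchar a -> is_mchar b ->
  (forall x, x != 0 -> a x = b x) -> a = b.
Proof.
move=> Ha Hb eq_ab; apply/ffunP => x; have [->|] := eqVneq x 0; last exact: eq_ab.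
by rewrite !mchar0.
Qed.

Lemma ch_invK : involutive (@ch_inv F).
Proof. by move=> a; apply/ffunP => x; rewrite !ffunE invrK. Qed.

Lemma ch_invM a b : ch_inv (ch_mul a b) = ch_mul (ch_inv a) (ch_inv b).
Proof. by apply/ffunP => x; rewrite !ffunE invfM. Qed.

Lemma ch_inv_eps : ch_inv (ch_eps F) = ch_eps F.
Proof. by apply/ffunP => x; rewrite !ffunE; case: (x != 0); rewrite ?invr1 ?invr0. Qed.

Lemma ch_inv_eq_eps l : (ch_inv l == ch_eps F) = (l == ch_eps F).
Proof. by rewrite -(inj_eq (can_inj ch_invK)) ch_invK ch_inv_eps. Qed.

Lemma ch_mul_epsl l : is_mchar l -> ch_mul (ch_eps F) l = l.
Proof.
move=> Hl; apply: mchar_eq => // [|x x_neq0]; last by rewrite !ffunE x_neq0 mul1r.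
by apply: is_mchar_mul => //; apply: is_mchar_eps.
Qed.

Lemma q_neq0 : q F != 0.
Proof. by rewrite pnatr_eq0 -lt0n; apply/card_gt0P; exists 0. Qed.

Lemma sum_mchar l : is_mchar l -> l != ch_eps F -> \sum_(x | x != 0) l x = 0.
Proof.
move=> Hl l_neq_eps.
have /existsP[x0 /andP[x0_neq0 lx0_neq1]] : [exists x, (x != 0) && (l x != 1)].
  apply: contraNT l_neq_eps => /existsPn l_eq1; apply/eqP/mchar_eq => // [|x x_neq0].
    exact: is_mchar_eps.
  by have := l_eq1 x; rewrite x_neq0 negbK ffunE x_neq0 => /eqP.
apply: (mull_fixed_eq0 lx0_neq1).
rewrite mulr_sumr [in RHS](reindex_inj (mulfI x0_neq0)) /=.
by apply: eq_big => [x|x _]; rewrite ?mulf_eq0 ?negb_or ?x0_neq0 // mcharM.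
Qed.

End MultiplicativeCharacters.

Ltac mchar_closure :=
  repeat first [assumption | apply: is_mchar_mul | apply: is_mchar_inv | exact: is_mchar_eps].

Section GaussSums.
Variables (F : finFieldType) (psi : F -> algC).
Hypothesis Hpsi : is_nontriv_addchar psi.
Implicit Types (l : chr F) (s : F).

Lemma addchar0 : psi 0 = 1.
Proof.
case: Hpsi => psiD [psi_neq0 _]; apply: (mulfI (psi_neq0 0)).
by rewrite -psiD addr0 mulr1.
Qed.

Lemma sum_addchar : \sum_x psi x = 0.
Proof.
case: Hpsi => psiD [_ [x1 psix1_neq1]]; apply: (mull_fixed_eq0 psix1_neq1).
rewrite mulr_sumr [in RHS](reindex_inj (addrI x1)) /=.
by apply: eq_bigr => x _; rewrite psiD.
Qed.

Lemma sum_addchar_scale s :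
  \sum_(x | x != 0) psi (s * x) = if s == 0 then q F - 1 else -1.
Proof.
have -> : \sum_(x | x != 0) psi (s * x) = \sum_x psi (s * x) - 1.
  by rewrite [\sum_x _](bigD1 0) //= mulr0 addchar0 addrC addrK.
have [->|s_neq0] := eqVneq s 0.
  by rewrite (eq_bigr (fun=> 1)) ?sumr_const // => x _; rewrite mul0r addchar0.
by have := sum_addchar; rewrite (reindex_inj (mulfI s_neq0)) /= => ->; rewrite sub0r.
Qed.

Lemma gauss_eps : gauss psi (ch_eps F) = 1.
Proof.
rewrite /gauss (eq_bigr (fun x => psi (1 * x))) => [|x x_neq0].
  by rewrite sum_addchar_scale oner_eq0 opprK.
by rewrite ffunE x_neq0 mulr1 mul1r.
Qed.

Lemma gauss0_eps : gauss0 psi (ch_eps F) = q F.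
Proof. by rewrite /gauss0 /ch_delta eqxx gauss_eps mulr1. Qed.

Lemma gauss_mul_gauss_inv l : is_mchar l -> l != ch_eps F ->
  gauss psi l * gauss psi (ch_inv l) = ch_inv l (-1) * q F.
Proof.
move=> Hl l_neq_eps; case: (Hpsi) => psiD _.
have il_neq_eps : ch_inv l != ch_eps F by rewrite ch_inv_eq_eps.
have inner x : x != 0 ->
    psi x * l x * \sum_(y | y != 0) psi y * ch_inv l y =
    \sum_(t | t != 0) ch_inv l t * psi ((1 + t) * x).
  move=> x_neq0; rewrite mulr_sumr (reindex_inj (mulfI x_neq0)) /=.
  apply: eq_big => [t|t]; first by rewrite mulf_eq0 negb_or x_neq0.
  rewrite mulf_eq0 negb_or x_neq0 => t_neq0.
  rewrite !ffunE mcharM // invfM mulrDl mul1r [t * x]mulrC psiD.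
  by field; rewrite !mchar_neq0.
rewrite /gauss mulrNN mulr_suml (eq_bigr _ inner) exchange_big /=.
rewrite (eq_bigr (fun t => ch_inv l t * q F *+ (t == -1) - ch_inv l t)) => [|t _].
  rewrite sumrB (sum_mchar (is_mchar_inv Hl) il_neq_eps) subr0.
  rewrite (bigD1 (-1)) ?oppr_eq0 ?oner_eq0 //=.
  by rewrite eqxx big1 ?addr0 // => t /andP[_ /negbTE->].
rewrite -mulr_sumr sum_addchar_scale addrC addr_eq0.
by case: (t == -1); rewrite ?mulr1n ?mulr0n ?sub0r ?mulrBr ?mulr1 ?mulrN1.
Qed.

Lemma gauss_neq0 l : is_mchar l -> gauss psi l != 0.
Proof.
move=> Hl; have [->|l_neq_eps] := eqVneq l (ch_eps F).
  by rewrite gauss_eps oner_eq0.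
have : ch_inv l (-1) * q F != 0.
  by rewrite mulf_neq0 ?q_neq0 //; exact/mcharN1_neq0/is_mchar_inv.
by rewrite -gauss_mul_gauss_inv // mulf_eq0 negb_or => /andP[].
Qed.

Lemma gauss0_reflect l : is_mchar l ->
  gauss0 psi l = l (-1) * q F / gauss psi (ch_inv l).
Proof.
move=> Hl; have [->|l_neq_eps] := eqVneq l (ch_eps F).
  by rewrite gauss0_eps ch_inv_eps gauss_eps ffunE oppr_eq0 oner_eq0 mul1r divr1.
have il_neq_eps : ch_inv l != ch_eps F by rewrite ch_inv_eq_eps.
rewrite /gauss0 /ch_delta (negbTE l_neq_eps) mul1r.
have := gauss_mul_gauss_inv (is_mchar_inv Hl) il_neq_eps; rewrite ch_invK => <-.
by rewrite [RHS]mulrC mulKf //; exact/gauss_neq0/is_mchar_inv.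
Qed.

End GaussSums.

Ltac mchar_ext :=
  let z := fresh "z" in let z_neq0 := fresh "z_neq0" in
  apply: mchar_eq; [mchar_closure | mchar_closure | move=> z z_neq0];
  rewrite !ffunE; field; repeat (apply/andP; split); apply: mchar_neq0 z_neq0;
  mchar_closure.

Section F4Reflection.
Variables (F : finFieldType) (psi : F -> algC).
Hypothesis Hpsi : is_nontriv_addchar psi.

Definition F4_term (a b c1 c2 : chr F) (x y : F) (n1 n2 : chr F) : algC :=
  poch psi a (ch_mul n1 n2) * poch psi b (ch_mul n1 n2)
  / (poch0 psi c1 n1 * poch0 psi c2 n2 * poch0 psi (ch_eps F) n1
     * poch0 psi (ch_eps F) n2)
  * n1 x * n2 y.

Lemma F4E a b c1 c2 x y : F4 psi a b c1 c2 x y =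
  (1 - q F) ^- 2 *
  \sum_(n1 \in @mchars F) \sum_(n2 \in @mchars F) F4_term a b c1 c2 x y n1 n2.
Proof. by []. Qed.

Definition dual_index (a n1 n2 : chr F) : chr F :=
  ch_inv (ch_mul a (ch_mul n1 n2)).

Lemma is_mchar_dual_index a n1 : is_mchar a -> is_mchar n1 ->
  {homo dual_index a n1 : n2 / is_mchar n2}.
Proof. by move=> Ha Hn1 n2 Hn2; rewrite /dual_index; mchar_closure. Qed.

Lemma dual_indexK a n1 : is_mchar a -> is_mchar n1 ->
  forall n2, is_mchar n2 -> dual_index a n1 (dual_index a n1 n2) = n2.
Proof. by move=> Ha Hn1 n2 Hn2; rewrite /dual_index; mchar_ext. Qed.

Variables (a b c1 c2 : chr F).
Hypotheses (Ha : is_mchar a) (Hb : is_mchar b) (Hc1 : is_mchar c1) (Hc2 : is_mchar c2).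

Lemma F4_term_reflect x y n1 n2 : y != 0 -> is_mchar n1 -> is_mchar n2 ->
  F4_term a b c1 c2 x y n1 n2 =
  gauss psi (ch_mul (ch_inv a) b) * gauss psi (ch_mul a (ch_inv c2))
    / (gauss psi b * gauss psi (ch_inv c2)) * ch_inv a y
  * F4_term a (ch_mul a (ch_inv c2)) c1 (ch_mul a (ch_inv b)) (x / y) (1 / y)
      n1 (dual_index a n1 n2).
Proof.
move=> y_neq0 Hn1 Hn2; rewrite /F4_term /poch /poch0.
(* [field] unfolds [gauss] into its defining sum, so its side conditions
   are stated on that sum. *)
have gauss_sum_neq0 l : is_mchar l -> \sum_(t | t != 0) psi t * l t != 0.
  by rewrite -oppr_eq0; exact: gauss_neq0.
have -> : ch_mul a (ch_mul n1 (dual_index a n1 n2)) = ch_inv n2.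
  by rewrite /dual_index; mchar_ext.
have -> : ch_mul (ch_mul a (ch_inv c2)) (ch_mul n1 (dual_index a n1 n2)) =
          ch_inv (ch_mul c2 n2).
  by rewrite /dual_index; mchar_ext.
have -> : ch_mul (ch_mul a (ch_inv b)) (dual_index a n1 n2) =
          ch_inv (ch_mul b (ch_mul n1 n2)).
  by rewrite /dual_index; mchar_ext.
rewrite /dual_index.
rewrite !ch_mul_epsl ?gauss0_eps //; last by mchar_closure.
rewrite !(gauss0_reflect Hpsi); try by mchar_closure.
rewrite !ch_invM !ch_invK !ffunE div1r (mcharM x y^-1 Hn1) !mcharV //.
(* Field cannot use [eta (-1) ^+ 2 = 1], so the signs are made concrete. *)
have [->|->] := mchar_sign Ha; have [->|->] := mchar_sign Hn1;
  have [->|->] := mchar_sign Hn2; field.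
all: rewrite ?q_neq0 ?oppr_eq0 ?oner_eq0 ?gauss_sum_neq0
  ?(mchar_neq0 _ y_neq0) ?mcharN1_neq0 //=.
all: mchar_closure.
Qed.

End F4Reflection.

Theorem proposition3p17 (F : finFieldType) (psi : F -> algC)
  (Hpsi : is_nontriv_addchar psi)
  (a b c1 c2 : chr F)
  (Ha : is_mchar a) (Hb : is_mchar b) (Hc1 : is_mchar c1) (Hc2 : is_mchar c2)
  (Hane : a != ch_eps F)
  (Hbcc : ch_mul (ch_mul (ch_inv b) c1) c2 != ch_eps F)
  (x y : F) (Hy : y != 0) :
  F4 psi a b c1 c2 x y =
  gauss psi (ch_mul (ch_inv a) b) * gauss psi (ch_mul a (ch_inv c2))
    / (gauss psi b * gauss psi (ch_inv c2))
  * ch_inv a y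
  * F4 psi a (ch_mul a (ch_inv c2)) c1 (ch_mul a (ch_inv b)) (x / y) (1 / y).
Proof.
rewrite !F4E [RHS]mulrCA; congr (_ * _).
rewrite mulr_fsumr; apply: eq_fsbigr => n1; rewrite in_setE => Hn1.
rewrite mulr_fsumr [RHS](fsbig_involution _ _ (is_mchar_dual_index Ha Hn1)
                                             (dual_indexK Ha Hn1)).
apply: eq_fsbigr => n2; rewrite in_setE => Hn2.
exact: F4_term_reflect.
Qed.
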